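(* Let $N$ be a smooth positive function on an open interval of positive $r$-values, let $a$ be a constant such that $F(r)=\int_a^r\frac{1}{N(\mu)}\,\mathrm{d}\mu$ is defined and has a smooth inverse $F^{-1}$ defined on an open interval $I$, and set $b_1(t)=N(F^{-1}(t))$, $b_2(t)=F^{-1}(t)$ for $t\in I$. Consider the $(2+1)$-dimensional Lorentzian multiply warped product $I\times{}_{b_1}F_1\times{}_{b_2}F_2$ with $F_1,F_2$ one-dimensional Riemannian manifolds with coordinates $x,\phi$ and metric $\mathrm{d}s^2=-\mathrm{d}t^2+b_1^2(t)\,\mathrm{d}x^2+b_2^2(t)\,\mathrm{d}\phi^2$. Then this space-time has constant scalar curvature $\tau=\lambda$ if and only if the square lapse function has the form $$N^2(r)=-\frac{c_1}{r}+\frac{\lambda}{6}r^2+c_2$$ for suitable constants $c_1,c_2$.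
   Context: Curvature sign conventions are those of O'Neill's ''Semi-Riemannian geometry'' (so that, e.g., the de Sitter space has positive scalar curvature). *)

From Stdlib Require Import Reals Lra.
From Coquelicot Require Import Coquelicot.
Open Scope R_scope.

(** * Coordinate (local) semi-Riemannian geometry in dimension 3.
    Points of a coordinate chart are functions [nat -> R] (only indices 0,1,2
    matter); a metric in coordinates is [g : (nat -> R) -> nat -> nat -> R]. *)

Definition sum3 (f : nat -> R) : R := f 0%nat + f 1%nat + f 2%nat.

Definition upd (p : nat -> R) (i : nat) (s : R) : nat -> R :=
  fun j => if Nat.eqb j i then s else p j.

Definition pd (i : nat) (f : (nat -> R) -> R) (p : nat -> R) : R :=
  Derive (fun s => f (upd p i s)) (p i).

Definition nx (i k : nat) : nat := Nat.modulo (i + k) 3.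

(** determinant and inverse of a 3x3 matrix (cofactor / adjugate formula) *)
Definition det3 (m : nat -> nat -> R) : R :=
  sum3 (fun j => m 0%nat j *
    (m 1%nat (nx j 1) * m 2%nat (nx j 2) - m 1%nat (nx j 2) * m 2%nat (nx j 1))).

Definition inv3 (m : nat -> nat -> R) (i j : nat) : R :=
  (m (nx j 1) (nx i 1) * m (nx j 2) (nx i 2)
   - m (nx j 1) (nx i 2) * m (nx j 2) (nx i 1)) / det3 m.

Section Curv.
Variable g : (nat -> R) -> nat -> nat -> R.

Definition ginv (p : nat -> R) (i j : nat) : R := inv3 (g p) i j.

Definition christoffel (k i j : nat) (p : nat -> R) : R :=
  / 2 * sum3 (fun l => ginv p k l *
     (pd i (fun q => g q j l) p + pd j (fun q => g q i l) p
      - pd l (fun q => g q i j) p)).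

(** Ricci tensor R_{ij} (standard sign convention, which agrees with O'Neill's
    for Ricci and scalar curvature: spheres / de Sitter have positive scalar
    curvature) *)
Definition ricci (i j : nat) (p : nat -> R) : R :=
  sum3 (fun k => pd k (christoffel k i j) p - pd j (christoffel k i k) p)
  + sum3 (fun k => sum3 (fun l =>
        christoffel k k l p * christoffel l i j p
      - christoffel k j l p * christoffel l i k p)).

Definition scalar_curvature (p : nat -> R) : R :=
  sum3 (fun i => sum3 (fun j => ginv p i j * ricci i j p)).
End Curv.

Definition in_ointerval (lo hi : Rbar) (x : R) : Prop :=
  Rbar_lt lo x /\ Rbar_lt x hi.

Definition smooth_on (D : R -> Prop) (f : R -> R) : Prop :=
  forall (k : nat) (x : R), D x -> ex_derive_n f k x.

Definition mwp_metric (b1 b2 : R -> R) (p : nat -> R) (i j : nat) : R :=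
  match i, j with
  | 0%nat, 0%nat => -1
  | 1%nat, 1%nat => (b1 (p 0%nat)) ^ 2
  | 2%nat, 2%nat => (b2 (p 0%nat)) ^ 2
  | _, _ => 0
  end.

(* The metric depends on t alone, so its Christoffel symbols, Ricci tensor and
   scalar curvature are functions of t, and a direct computation gives
   tau = 2 (b1''/b1 + b2''/b2 + b1' b2' / (b1 b2)).  Along r = F^{-1}(t) we
   have dr/dt = N(r), b2 = r and b1 = N(r); for u = N^2 this turns tau into
   u'' + 2 u'/r = (r^2 u')' / r^2.  Hence tau = lambda exactly when
   r^2 u' - lambda r^3 / 3 is a constant c1, i.e. when
   u + c1 / r - lambda r^2 / 6 is a constant c2. *)

From Stdlib Require Import Reals Lra Lia.
From Coquelicot Require Import Coquelicot.
Open Scope R_scope.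

Definition time_pd (i : nat) (h : R -> R) (t : R) : R :=
  match i with O => Derive h t | _ => 0 end.

Lemma pd_time_function i f h p :
  (forall q, f q = h (q 0%nat)) -> pd i f p = time_pd i h (p 0%nat).
Proof.
  intros Hf. unfold pd. destruct i; simpl.
  - apply Derive_ext; intros s. now rewrite Hf.
  - rewrite (Derive_ext _ (fun _ => h (p 0%nat))) by (intros; now rewrite Hf).
    apply Derive_const.
Qed.

Lemma Derive_square (f : R -> R) x :
  ex_derive f x -> Derive (fun s => f s ^ 2) x = 2 * f x * Derive f x.
Proof. intros Hf. rewrite Derive_pow by exact Hf. simpl. ring. Qed.

Section TimeDependentMetric.
Variables b1 b2 : R -> R.

Definition mwp_at (t : R) : nat -> nat -> R := mwp_metric b1 b2 (fun _ => t).

Definition mwp_christoffel (k i j : nat) (t : R) : R :=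
  / 2 * sum3 (fun l => inv3 (mwp_at t) k l *
    (time_pd i (fun s => mwp_at s j l) t + time_pd j (fun s => mwp_at s i l) t
     - time_pd l (fun s => mwp_at s i j) t)).

Lemma christoffel_mwp k i j p :
  christoffel (mwp_metric b1 b2) k i j p = mwp_christoffel k i j (p 0%nat).
Proof.
  unfold christoffel, mwp_christoffel, ginv, sum3.
  assert (Hpd : forall i j l, pd i (fun q => mwp_metric b1 b2 q j l) p
                              = time_pd i (fun s => mwp_at s j l) (p 0%nat))
    by (intros; now apply pd_time_function).
  now rewrite !Hpd.
Qed.

Definition mwp_ricci (i j : nat) (t : R) : R :=
  sum3 (fun k => time_pd k (mwp_christoffel k i j) t - time_pd j (mwp_christoffel k i k) t)
  + sum3 (fun k => sum3 (fun l =>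
      mwp_christoffel k k l t * mwp_christoffel l i j t
      - mwp_christoffel k j l t * mwp_christoffel l i k t)).

Lemma ricci_mwp i j p : ricci (mwp_metric b1 b2) i j p = mwp_ricci i j (p 0%nat).
Proof.
  unfold ricci, mwp_ricci, sum3.
  now rewrite !(pd_time_function _ _ _ _ (christoffel_mwp _ _ _)), !christoffel_mwp.
Qed.

Definition mwp_scalar (t : R) : R :=
  sum3 (fun i => sum3 (fun j => inv3 (mwp_at t) i j * mwp_ricci i j t)).

Lemma scalar_curvature_mwp p :
  scalar_curvature (mwp_metric b1 b2) p = mwp_scalar (p 0%nat).
Proof. unfold scalar_curvature, mwp_scalar, sum3. now rewrite !ricci_mwp. Qed.

Definition mwp_christoffel_explicit (k i j : nat) (t : R) : R :=
  match k, i, j with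
  | 0%nat, 1%nat, 1%nat => b1 t * Derive b1 t
  | 0%nat, 2%nat, 2%nat => b2 t * Derive b2 t
  | 1%nat, 0%nat, 1%nat | 1%nat, 1%nat, 0%nat => Derive b1 t / b1 t
  | 2%nat, 0%nat, 2%nat | 2%nat, 2%nat, 0%nat => Derive b2 t / b2 t
  | _, _, _ => 0
  end.

Lemma mwp_christoffelE k i j t : (k < 3)%nat -> (i < 3)%nat -> (j < 3)%nat ->
  b1 t <> 0 -> b2 t <> 0 -> ex_derive b1 t -> ex_derive b2 t ->
  mwp_christoffel k i j t = mwp_christoffel_explicit k i j t.
Proof.
  intros Hk Hi Hj H1 H2 D1 D2.
  destruct k as [|[|[|k]]]; try lia; destruct i as [|[|[|i]]]; try lia;
  destruct j as [|[|[|j]]]; try lia;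
  unfold mwp_christoffel, mwp_christoffel_explicit, inv3, det3, sum3, time_pd,
    mwp_at, mwp_metric; cbn -[pow];
  rewrite ?Derive_square by auto; rewrite ?Derive_const; field; auto.
Qed.

Lemma mwp_scalarE t :
  locally t (fun s => b1 s <> 0 /\ b2 s <> 0 /\ ex_derive b1 s /\ ex_derive b2 s) ->
  ex_derive (Derive b1) t -> ex_derive (Derive b2) t ->
  mwp_scalar t = 2 * (Derive (Derive b1) t / b1 t + Derive (Derive b2) t / b2 t
                      + Derive b1 t * Derive b2 t / (b1 t * b2 t)).
Proof.
  intros Hnear DD1 DD2.
  destruct (locally_singleton _ _ Hnear) as [H1 [H2 [D1 D2]]].
  assert (Hpd : forall k i j l, (k < 3)%nat -> (i < 3)%nat -> (j < 3)%nat ->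
    time_pd l (mwp_christoffel k i j) t = time_pd l (mwp_christoffel_explicit k i j) t).
  { intros k i j [|l] Hk Hi Hj; simpl; [|reflexivity].
    apply Derive_ext_loc. eapply filter_imp; [|exact Hnear].
    intros s [? [? [? ?]]]. now apply mwp_christoffelE. }
  unfold mwp_scalar, mwp_ricci, sum3.
  rewrite !Hpd, !mwp_christoffelE by (auto; lia).
  unfold mwp_christoffel_explicit, time_pd, inv3, det3, mwp_at, mwp_metric, sum3; simpl.
  rewrite ?Derive_const, ?Derive_mult, ?Derive_div by auto.
  field; auto.
Qed.
End TimeDependentMetric.

Lemma in_ointerval_near lo hi x (P : R -> Prop) : in_ointerval lo hi x ->
  (forall y, in_ointerval lo hi y -> P y) -> locally x P.
Proof.
  intros Hx HP. eapply filter_imp; [exact HP|].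
  apply (@open_and R_UniformSpace (fun u => Rbar_lt lo u) (fun u => Rbar_lt u hi));
    [apply open_Rbar_gt | apply open_Rbar_lt | exact Hx].
Qed.

Lemma in_ointerval_between lo hi x y z :
  in_ointerval lo hi x -> in_ointerval lo hi y ->
  Rmin x y <= z <= Rmax x y -> in_ointerval lo hi z.
Proof.
  unfold in_ointerval, Rmin, Rmax. intros [H1 H2] [H3 H4] Hz.
  destruct (Rle_dec x y); destruct lo, hi; simpl in *; split; try tauto; lra.
Qed.

Lemma in_ointerval_gt0 lo hi r : Rbar_le 0 lo -> in_ointerval lo hi r -> 0 < r.
Proof. intros H [H1 _]. destruct lo; simpl in *; try tauto; lra. Qed.

Lemma is_derive_0_in_ointerval lo hi (f : R -> R) a :
  (forall s, in_ointerval lo hi s -> is_derive f s 0) ->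
  in_ointerval lo hi a -> forall r, in_ointerval lo hi r -> f r = f a.
Proof.
  intros Hd Ha r Hr.
  assert (Hseg : forall s, Rmin a r <= s <= Rmax a r -> is_derive f s 0)
    by (intros s Hs; apply Hd; exact (in_ointerval_between _ _ _ _ _ Ha Hr Hs)).
  unfold Rmin, Rmax in Hseg. destruct (Rle_dec a r) as [Har|Hra].
  - destruct Har as [Har|<-]; [|reflexivity].
    symmetry. now apply eq_is_derive.
  - apply eq_is_derive; [intros; apply Hseg|]; lra.
Qed.

Definition radial_operator (u : R -> R) (r : R) : R :=
  Derive (Derive u) r + 2 * Derive u r / r.

Section RadialEquation.
Variables (lo hi : Rbar) (u : R -> R) (lambda : R).
Hypothesis Hlo : Rbar_le 0 lo.

Lemma radial_equation_solution a :
  in_ointerval lo hi a ->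
  (forall r, in_ointerval lo hi r -> ex_derive u r /\ ex_derive (Derive u) r) ->
  (forall r, in_ointerval lo hi r -> radial_operator u r = lambda) ->
  exists c1 c2, forall r, in_ointerval lo hi r ->
    u r = - c1 / r + lambda / 6 * r ^ 2 + c2.
Proof.
  intros Ha Hu Heq.
  set (flux := fun r => r ^ 2 * Derive u r - lambda * r ^ 3 / 3).
  assert (Hflux : forall r, in_ointerval lo hi r -> flux r = flux a).
  { apply is_derive_0_in_ointerval; [|exact Ha]. intros s Hs.
    assert (Hs0 := in_ointerval_gt0 _ _ _ Hlo Hs).
    destruct (Hu s Hs) as [_ Hu2]. specialize (Heq s Hs). unfold radial_operator in Heq.
    unfold flux. auto_derive; [exact Hu2|].
    change (Derive (fun x => Derive u x) s) with (Derive (Derive u) s).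
    rewrite <- Heq. field. lra. }
  exists (flux a), (u a + flux a / a - lambda / 6 * a ^ 2). intros r Hr.
  set (v := fun r => u r + flux a / r - lambda / 6 * r ^ 2).
  assert (Hv : v r = v a).
  { revert r Hr. apply is_derive_0_in_ointerval; [|exact Ha]. intros s Hs.
    assert (Hs0 := in_ointerval_gt0 _ _ _ Hlo Hs).
    destruct (Hu s Hs) as [Hu1 _]. specialize (Hflux s Hs).
    unfold v. auto_derive; [split; [exact Hu1|lra]|].
    change (Derive (fun x => u x) s) with (Derive u s).
    rewrite <- Hflux. unfold flux. field. lra. }
  assert (Hr0 := in_ointerval_gt0 _ _ _ Hlo Hr).
  unfold v in Hv. rewrite <- Hv. field. lra.
Qed.

Lemma radial_operator_of_solution c1 c2 :
  (forall r, in_ointerval lo hi r -> u r = - c1 / r + lambda / 6 * r ^ 2 + c2) ->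
  forall r, in_ointerval lo hi r -> radial_operator u r = lambda.
Proof.
  intros Hsol r Hr.
  assert (Hu' : forall s, in_ointerval lo hi s -> Derive u s = c1 / s ^ 2 + lambda / 3 * s).
  { intros s Hs. assert (Hs0 := in_ointerval_gt0 _ _ _ Hlo Hs).
    rewrite (Derive_ext_loc _ (fun s => - c1 / s + lambda / 6 * s ^ 2 + c2))
      by exact (in_ointerval_near _ _ _ _ Hs Hsol).
    apply is_derive_unique. auto_derive; [lra|]. field. lra. }
  assert (Hr0 := in_ointerval_gt0 _ _ _ Hlo Hr).
  unfold radial_operator.
  rewrite (Derive_ext_loc _ (fun s => c1 / s ^ 2 + lambda / 3 * s))
    by exact (in_ointerval_near _ _ _ _ Hr Hu').
  rewrite Hu' by exact Hr.
  rewrite (is_derive_unique _ _ (- 2 * c1 / r ^ 3 + lambda / 3))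
    by (auto_derive; [nra|field; lra]).
  field. lra.
Qed.

Lemma radial_equation_iff a :
  in_ointerval lo hi a ->
  (forall r, in_ointerval lo hi r -> ex_derive u r /\ ex_derive (Derive u) r) ->
  (forall r, in_ointerval lo hi r -> radial_operator u r = lambda) <->
  (exists c1 c2, forall r, in_ointerval lo hi r ->
     u r = - c1 / r + lambda / 6 * r ^ 2 + c2).
Proof.
  intros Ha Hu. split.
  - exact (radial_equation_solution a Ha Hu).
  - intros [c1 [c2 Hsol]]. exact (radial_operator_of_solution c1 c2 Hsol).
Qed.
End RadialEquation.

Lemma is_derive_Derive_square (f : R -> R) x :
  locally x (ex_derive f) -> ex_derive (Derive f) x ->
  is_derive (Derive (fun s => f s ^ 2)) x
    (2 * (Derive f x ^ 2 + f x * Derive (Derive f) x)).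
Proof.
  intros Hf Hf2.
  apply (is_derive_ext_loc (fun s => 2 * f s * Derive f s)).
  - eapply filter_imp; [|exact Hf]. intros s Hs. now rewrite Derive_square.
  - auto_derive; [exact (conj (locally_singleton _ _ Hf) (conj Hf2 I))|].
    change (Derive (fun x => f x) x) with (Derive f x).
    change (Derive (fun x => Derive f x) x) with (Derive (Derive f) x). ring.
Qed.

Lemma radial_operator_square (f : R -> R) r :
  locally r (ex_derive f) -> ex_derive (Derive f) r -> r <> 0 ->
  radial_operator (fun s => f s ^ 2) r
  = 2 * (f r * Derive (Derive f) r + Derive f r ^ 2 + 2 * f r * Derive f r / r).
Proof.
  intros Hf Hf2 Hr. unfold radial_operator.
  rewrite (is_derive_unique _ _ _ (is_derive_Derive_square f r Hf Hf2)).
  rewrite Derive_square by exact (locally_singleton _ _ Hf). field. exact Hr.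
Qed.

Section TimeChange.
Variables (lo hi i1 i2 : Rbar) (N phi : R -> R).
Hypothesis Hlo : Rbar_le 0 lo.
Hypothesis HN : forall r, in_ointerval lo hi r -> ex_derive N r /\ ex_derive (Derive N) r.
Hypothesis HN0 : forall r, in_ointerval lo hi r -> N r <> 0.
Hypothesis Hphi_in : forall t, in_ointerval i1 i2 t -> in_ointerval lo hi (phi t).
Hypothesis Hphi : forall t, in_ointerval i1 i2 t -> is_derive phi t (N (phi t)).

Lemma is_derive_along_phi (g : R -> R) t l : in_ointerval i1 i2 t ->
  is_derive g (phi t) l -> is_derive (fun s => g (phi s)) t (l * N (phi t)).
Proof.
  intros Ht Hg. rewrite Rmult_comm. exact (is_derive_comp g phi t l _ Hg (Hphi t Ht)).
Qed.

Lemma is_derive_N_phi t : in_ointerval i1 i2 t ->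
  is_derive (fun s : R => N (phi s)) t (Derive N (phi t) * N (phi t)).
Proof.
  intros Ht. apply is_derive_along_phi; [exact Ht|].
  apply Derive_correct, HN, Hphi_in, Ht.
Qed.

Lemma is_derive_Derive_phi t : in_ointerval i1 i2 t ->
  is_derive (Derive phi) t (Derive N (phi t) * N (phi t)).
Proof.
  intros Ht. apply (is_derive_ext_loc (fun s => N (phi s))); [|exact (is_derive_N_phi t Ht)].
  apply (in_ointerval_near _ _ _ _ Ht). intros s Hs.
  symmetry. exact (is_derive_unique _ _ _ (Hphi s Hs)).
Qed.

Lemma is_derive_Derive_N_phi t : in_ointerval i1 i2 t ->
  is_derive (Derive (fun s => N (phi s))) t
    ((Derive (Derive N) (phi t) * N (phi t) + Derive N (phi t) * Derive N (phi t))
     * N (phi t)).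
Proof.
  intros Ht. apply (is_derive_ext_loc (fun s => Derive N (phi s) * N (phi s))).
  - apply (in_ointerval_near _ _ _ _ Ht). intros s Hs.
    symmetry. exact (is_derive_unique _ _ _ (is_derive_N_phi s Hs)).
  - replace ((Derive (Derive N) (phi t) * N (phi t)
              + Derive N (phi t) * Derive N (phi t)) * N (phi t))
      with (Derive (Derive N) (phi t) * N (phi t) * N (phi t)
            + Derive N (phi t) * (Derive N (phi t) * N (phi t))) by ring.
    apply (is_derive_mult (fun s => Derive N (phi s)) (fun s => N (phi s)));
      [ apply is_derive_along_phi, Derive_correct, HN, Hphi_in; exact Ht
      | exact (is_derive_N_phi t Ht) | intros; apply Rmult_comm ].
Qed.

Lemma mwp_scalar_time_change t : in_ointerval i1 i2 t ->
  mwp_scalar (fun s => N (phi s)) phi t = radial_operator (fun r => N r ^ 2) (phi t).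
Proof.
  intros Ht.
  assert (Hr := Hphi_in t Ht). assert (Hr0 := in_ointerval_gt0 _ _ _ Hlo Hr).
  rewrite mwp_scalarE.
  - rewrite (is_derive_unique _ _ _ (is_derive_Derive_N_phi t Ht)),
      (is_derive_unique _ _ _ (is_derive_Derive_phi t Ht)),
      (is_derive_unique _ _ _ (is_derive_N_phi t Ht)),
      (is_derive_unique _ _ _ (Hphi t Ht)).
    rewrite radial_operator_square.
    + assert (HNr := HN0 _ Hr). field. lra.
    + apply (in_ointerval_near _ _ _ _ Hr). intros; now apply HN.
    + now apply HN.
    + lra.
  - apply (in_ointerval_near _ _ _ _ Ht). intros s Hs.
    assert (Hs' := Hphi_in s Hs).
    repeat split.
    + now apply HN0.
    + assert (Hs0 := in_ointerval_gt0 _ _ _ Hlo Hs'). lra.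
    + exact (ex_intro _ _ (is_derive_N_phi s Hs)).
    + exact (ex_intro _ _ (Hphi s Hs)).
  - exact (ex_intro _ _ (is_derive_Derive_N_phi t Ht)).
  - exact (ex_intro _ _ (is_derive_Derive_phi t Ht)).
Qed.
End TimeChange.

Lemma inverse_of_primitive_is_derive (lo hi i1 i2 : Rbar) (N phi : R -> R) (a t : R) :
  (forall r, in_ointerval lo hi r -> continuous N r /\ N r <> 0) ->
  in_ointerval lo hi a ->
  (forall s, in_ointerval i1 i2 s -> in_ointerval lo hi (phi s)) ->
  (forall s, in_ointerval i1 i2 s -> RInt (fun mu => / N mu) a (phi s) = s) ->
  in_ointerval i1 i2 t -> ex_derive phi t -> is_derive phi t (N (phi t)).
Proof.
  intros HN Ha Hphi_in Hinv Ht Hphi.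
  assert (Hcont : forall r, in_ointerval lo hi r -> continuous (fun mu => / N mu) r)
    by (intros r Hr; apply continuous_Rinv_comp; apply HN, Hr).
  assert (Hr := Hphi_in t Ht). assert (HNr := proj2 (HN _ Hr)).
  assert (HF : is_derive (RInt (fun mu => / N mu) a) (phi t) (/ N (phi t))).
  { apply (is_derive_RInt (fun mu => / N mu) _ a); [|exact (Hcont _ Hr)].
    apply (in_ointerval_near _ _ _ _ Hr). intros b Hb.
    apply (@RInt_correct R_CompleteNormedModule), ex_RInt_continuous.
    intros z Hz. exact (Hcont z (in_ointerval_between _ _ _ _ _ Ha Hb Hz)). }
  assert (Hid : is_derive (fun s : R => s) t (Derive phi t * / N (phi t))).
  { apply (is_derive_ext_loc (fun s => RInt (fun mu => / N mu) a (phi s))).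
    - apply (in_ointerval_near _ _ _ _ Ht). intros s Hs. exact (Hinv s Hs).
    - exact (is_derive_comp _ _ _ _ _ HF (Derive_correct _ _ Hphi)). }
  replace (N (phi t)) with (Derive phi t); [exact (Derive_correct _ _ Hphi)|].
  assert (Hone := is_derive_unique _ _ _ Hid). rewrite Derive_id in Hone.
  apply (Rmult_eq_reg_r (/ N (phi t))); [|now apply Rinv_neq_0_compat].
  rewrite <- Hone. field. exact HNr.
Qed.

Theorem proposition6p3
  (r1 r2 : Rbar) (i1 i2 : Rbar) (N Finv : R -> R) (a lambda : R)
  (Hpos_int : Rbar_le (Finite 0) r1)
  (Hint : Rbar_lt r1 r2)
  (HNsmooth : smooth_on (in_ointerval r1 r2) N)
  (HNpos : forall r, in_ointerval r1 r2 r -> 0 < N r)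
  (Ha : in_ointerval r1 r2 a)
  (HFinv_in : forall t, in_ointerval i1 i2 t -> in_ointerval r1 r2 (Finv t))
  (HF_in : forall r, in_ointerval r1 r2 r ->
             in_ointerval i1 i2 (RInt (fun mu => / N mu) a r))
  (HFFinv : forall t, in_ointerval i1 i2 t ->
             RInt (fun mu => / N mu) a (Finv t) = t)
  (HFinvF : forall r, in_ointerval r1 r2 r ->
             Finv (RInt (fun mu => / N mu) a r) = r)
  (HFinv_smooth : smooth_on (in_ointerval i1 i2) Finv) :
  (forall p : nat -> R, in_ointerval i1 i2 (p 0%nat) ->
     scalar_curvature (mwp_metric (fun t => N (Finv t)) (fun t => Finv t)) p
       = lambda)
  <->
  (exists c1 c2 : R, forall r, in_ointerval r1 r2 r ->
     (N r) ^ 2 = - c1 / r + lambda / 6 * r ^ 2 + c2).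
Proof.
  assert (HN : forall r, in_ointerval r1 r2 r -> ex_derive N r /\ ex_derive (Derive N) r)
    by (intros r Hr; exact (conj (HNsmooth 1%nat r Hr) (HNsmooth 2%nat r Hr))).
  assert (HN0 : forall r, in_ointerval r1 r2 r -> N r <> 0)
    by (intros r Hr; specialize (HNpos r Hr); lra).
  assert (HFinv' : forall t, in_ointerval i1 i2 t -> is_derive Finv t (N (Finv t))).
  { intros t Ht. apply (inverse_of_primitive_is_derive r1 r2 i1 i2 N Finv a);
      [|exact Ha|exact HFinv_in|exact HFFinv|exact Ht|exact (HFinv_smooth 1%nat t Ht)].
    intros r Hr. split; [|exact (HN0 r Hr)].
    apply (@ex_derive_continuous R_AbsRing R_NormedModule). now apply HN. }
  rewrite <- (radial_equation_iff r1 r2 (fun r => N r ^ 2) lambda Hpos_int a Ha).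
  2:{ intros r Hr. split; [apply ex_derive_pow, HN, Hr|].
      eexists. apply is_derive_Derive_square; [|now apply HN].
      apply (in_ointerval_near _ _ _ _ Hr). intros; now apply HN. }
  assert (Htime :=
    mwp_scalar_time_change r1 r2 i1 i2 N Finv Hpos_int HN HN0 HFinv_in HFinv').
  split.
  - intros Hscal r Hr. rewrite <- (HFinvF r Hr), <- Htime by (apply HF_in, Hr).
    rewrite <- (scalar_curvature_mwp _ _ (fun _ => RInt (fun mu => / N mu) a r)).
    now apply Hscal, HF_in.
  - intros Hrad p Hp. rewrite scalar_curvature_mwp, Htime by exact Hp.
    now apply Hrad, HFinv_in.
Qed.
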